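(* Let $(A,\succ,\prec,\omega)$ be a quadratic Leibniz-dendriform algebra and $r\in A\otimes A$ such that $r+\tau(r)$ is invariant. Define $P:A\to A$ by $P(x)=T_r(\omega^\sharp(x))$. Then $r$ satisfies $S(r)=0$ if and only if for all $x,y\in A$: $P(x)\succ P(y)=P\big(P(x)\succ y+x\succ P(y)-x\succ T_{r+\tau(r)}\omega^\sharp(y)\big)$ and $P(x)\prec P(y)=P\big(P(x)\prec y+x\prec P(y)-x\prec T_{r+\tau(r)}\omega^\sharp(y)\big)$.
   Context: $\langle\cdot,\cdot\rangle$ is the natural pairing, $I$ the identity, $\tau(a\otimes b)=b\otimes a$. A Leibniz-dendriform algebra is a vector space $A$ with bilinear operations $\succ,\prec$ such that, with $x\circ y:=x\succ y+x\prec y$, for all $x,y,z$: $(x\circ y)\succ z=x\succ(y\succ z)-y\succ(x\succ z)$, $y\prec(x\circ z)+(x\succ y)\prec z=x\succ(y\prec z)$, $x\prec(y\circ z)=(x\prec y)\prec z+y\succ(x\prec z)$. A quadratic Leibniz-dendriform algebra is one with a non-degenerate symmetric bilinear form $\omega$ with $\omega(x\prec y,z)=\omega(x,y\circ z+z\circ y)$ and $\omega(x\succ y,z)=-\omega(y,x\circ z)$ for all $x,y,z$; $\omega^\sharp:A\to A^*$ is $\langle\omega^\sharp(x),y\rangle=\omega(x,y)$. Write $x\odot y:=x\succ y+y\prec x$, $x\star y:=x\circ y+y\circ x$; $L_*(x)y=x*y$, $R_*(x)y=y*x$; $L_\odot:=L_\succ+R_\prec$, $L_\star:=L_\circ+R_\circ$.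 For $r=\sum_ia_i\otimes b_i$: $T_r:A^*\to A$, $\langle T_r(\zeta),\eta\rangle=\langle r,\zeta\otimes\eta\rangle$; $S(r):=\sum_{i,j}\big(a_i\otimes a_j\otimes (b_j\circ b_i)-a_i\otimes (b_i\odot a_j)\otimes b_j-(a_i\succ a_j)\otimes b_i\otimes b_j\big)$. $s\in A\otimes A$ is invariant if for all $x$: $(L_\odot(x)\otimes I-I\otimes R_\circ(x))s=0$ and $(L_\star(x)\otimes I-I\otimes R_\prec(x))\tau(s)=0$. *)

(* A finite-dimensional vector space A over a field K is
   modelled as 'rV[K]_n; tensors in A (x) A (resp. A (x) A (x) A) are finite
   sums of pure tensors, i.e. sequences of pairs (triples), compared through
   their coordinates in the standard basis. *)
From HB Require Import structures.
From mathcomp Require Import all_boot all_order all_algebra.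
Set Implicit Arguments. Unset Strict Implicit. Unset Printing Implicit Defensive.
Import Order.TTheory GRing.Theory Num.Theory.
Local Open Scope ring_scope.

Section LD.
Variables (K : fieldType) (n : nat).
Local Notation A := 'rV[K]_n.

Definition bilinear_op (m : A -> A -> A) : Prop :=
  (forall (a : K) x y z, m (a *: x + y) z = a *: m x z + m y z) /\
  (forall (a : K) x y z, m x (a *: y + z) = a *: m x y + m x z).

Definition bilinear_form (w : A -> A -> K) : Prop :=
  (forall (a : K) x y z, w (a *: x + y) z = a * w x z + w y z) /\
  (forall (a : K) x y z, w x (a *: y + z) = a * w x y + w x z).

Variables (succ prec : A -> A -> A).

Definition circ x y := succ x y + prec x y.
Definition odot x y := succ x y + prec y x.
Definition star x y := circ x y + circ y x.

Definition is_LD_algebra : Prop :=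
  bilinear_op succ /\ bilinear_op prec /\
  (forall x y z, succ (circ x y) z = succ x (succ y z) - succ y (succ x z)) /\
  (forall x y z, prec y (circ x z) + prec (succ x y) z = succ x (prec y z)) /\
  (forall x y z, prec x (circ y z) = prec (prec x y) z + succ y (prec x z)).

Definition is_quadratic_LD (w : A -> A -> K) : Prop :=
  is_LD_algebra /\ bilinear_form w /\
  (forall x y, w x y = w y x) /\
  (forall x, (forall y, w x y = 0) -> x = 0) /\
  (forall x y z, w (prec x y) z = w x (circ y z + circ z y)) /\
  (forall x y z, w (succ x y) z = - w y (circ x z)).

Definition tcoord2 (s : seq (A * A)) (p q : 'I_n) : K :=
  \sum_(u <- s) u.1 0 p * u.2 0 q.
Definition teq2 (s t : seq (A * A)) : Prop :=
  forall p q, tcoord2 s p q = tcoord2 t p q.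
Definition tau (s : seq (A * A)) : seq (A * A) := map (fun u => (u.2, u.1)) s.
Definition tadd (s t : seq (A * A)) : seq (A * A) := s ++ t.
Definition tapp2 (f g : A -> A) (s : seq (A * A)) : seq (A * A) :=
  map (fun u => (f u.1, g u.2)) s.

Definition LD_invariant (s : seq (A * A)) : Prop :=
  forall x : A,
    teq2 (tapp2 (odot x) id s) (tapp2 id (fun y => circ y x) s) /\
    teq2 (tapp2 (star x) id (tau s)) (tapp2 id (fun y => prec y x) (tau s)).

(* T_r : A^* -> A, with zeta in A^* given as a (linear) map A -> K:
   T_r(zeta) = sum_i zeta(a_i) b_i *)
Definition Tr (s : seq (A * A)) (zeta : A -> K) : A :=
  \sum_(u <- s) zeta u.1 *: u.2.

(* omega^sharp x = omega x (as a functional) *)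
Definition Pmap (w : A -> A -> K) (r : seq (A * A)) (x : A) : A := Tr r (w x).

(* coordinates of S(r) in A (x) A (x) A *)
Definition Scoord (r : seq (A * A)) (p q t : 'I_n) : K :=
  \sum_(i <- r) \sum_(j <- r)
    (i.1 0 p * j.1 0 q * (circ j.2 i.2) 0 t
     - i.1 0 p * (odot i.2 j.1) 0 q * j.2 0 t
     - (succ i.1 j.1) 0 p * i.2 0 q * j.2 0 t).

Definition S_zero (r : seq (A * A)) : Prop :=
  forall p q t, Scoord r p q t = 0.

End LD.

From Pilot Require Import Defs.
From HB Require Import structures.
From mathcomp Require Import all_boot all_order all_algebra sesquilinear ring.
Import GRing.Theory.
Local Open Scope ring_scope.
Set Implicit Arguments. Unset Strict Implicit. Unset Printing Implicit Defensive.

(* Write P = T_r ω♯, let Q be its ω-adjoint (the map built from τ(r)) and T = P + Q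
   the map built from r + τ(r).  Invariance of r + τ(r) makes T commute with right
   multiplication by ∘ and ≺, hence T(a ∘ b) = a ∘ T b = T a ∘ b, and likewise for ⋆.
   Pairing S(r) with ω♯x ⊗ ω♯y ⊗ ω♯z gives ω(z, G(y, x)) where
   G(x, z) = P x ∘ P z - P(x ∘ P z) + P(Q x ∘ z) ([circ_defect]), so S(r) = 0 iff G
   vanishes.  By adjointness the defects of the ≻- and ≺-identities pair to
   -ω(y, G(x, z)) and ω(x, G(y, z) + G(z, y)); so S(r) = 0 gives both identities,
   and the ≻-identity alone already forces G = 0. *)

Section RowVectorForms.
Variables (K : fieldType) (n : nat).
Local Notation A := 'rV[K]_n.
Local Notation e_ p := (delta_mx 0 p : A).

Lemma bilinear_op_for (m : A -> A -> A) : bilinear_op m -> bilinear_for *:%R *:%R m.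
Proof. by case=> ml mr; split=> u a x y; [exact: ml | exact: mr]. Qed.

Lemma bilinear_form_for (w : A -> A -> K) : bilinear_form w -> bilinear_for *%R *%R w.
Proof. by case=> wl wr; split=> u a x y; [exact: wl | exact: wr]. Qed.

Lemma tauK : involutive (@tau K n).
Proof. by move=> s; rewrite /tau -map_comp map_id_in // => -[]. Qed.

Variable w : {bilinear A -> A -> K | *%R & *%R}.

Lemma form_coord_expand x v : w x v = \sum_(p < n) v 0 p * w x (e_ p).
Proof.
by rewrite {1}[v]row_sum_delta linear_sumr; apply: eq_bigr => p _; rewrite linearZr.
Qed.

Lemma contraction_coord x z (s : seq (A * A)) :
  \sum_(u <- s) w x u.1 * w z u.2 =
  \sum_(p < n) \sum_(q < n) w x (e_ p) * w z (e_ q) * tcoord2 s p q.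
Proof.
under eq_bigr => u _ do rewrite (form_coord_expand x) (form_coord_expand z) big_distrlr.
rewrite exchange_big; apply: eq_bigr => p _; rewrite exchange_big; apply: eq_bigr => q _.
by rewrite /tcoord2 mulr_sumr; apply: eq_bigr => u _ /=; ring.
Qed.

Lemma contraction_teq2 x z (s t : seq (A * A)) : teq2 s t ->
  \sum_(u <- s) w x u.1 * w z u.2 = \sum_(u <- t) w x u.1 * w z u.2.
Proof.
move=> st; rewrite !contraction_coord.
by apply: eq_bigr => p _; apply: eq_bigr => q _; rewrite st.
Qed.

Definition gram : 'M[K]_n := \matrix_(p, q) w (e_ p) (e_ q).

Lemma mul_gram u q : (u *m gram) 0 q = w u (e_ q).
Proof.
rewrite mxE {2}[u]row_sum_delta linear_sumlz; apply: eq_bigr => p _.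
by rewrite mxE linearZl.
Qed.

Hypothesis w_nondeg : forall x, (forall y, w x y = 0) -> x = 0.

Lemma gram_unit : gram \in unitmx.
Proof.
rewrite -row_free_unit; apply: inj_row_free => u u0.
apply: w_nondeg => v; rewrite form_coord_expand big1 // => q _.
by rewrite -mul_gram u0 mxE mulr0.
Qed.

Lemma dual_basis : exists f : 'I_n -> A, forall p v, w (f p) v = v 0 p.
Proof.
exists (fun p => e_ p *m invmx gram) => p v.
rewrite form_coord_expand (bigD1 p) //= big1 => [|q qp].
  by rewrite -mul_gram mulmxKV ?gram_unit // mxE !eqxx mulr1 addr0.
by rewrite -mul_gram mulmxKV ?gram_unit // mxE (negbTE qp) andbF mulr0.
Qed.

Lemma dual_basis_expand (f : 'I_n -> A) : (forall p v, w (f p) v = v 0 p) ->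
  forall u, u = \sum_(p < n) w u (e_ p) *: f p.
Proof.
move=> fE u; apply/subr0_eq/w_nondeg => v.
rewrite linearBl linear_sumlz /= form_coord_expand -sumrB big1 // => p _.
by rewrite linearZl /= fE mulrC subrr.
Qed.
End RowVectorForms.

Section LeibnizDendriform.
Variables (K : fieldType) (n : nat).
Local Notation A := 'rV[K]_n.
Variables (succ prec : A -> A -> A) (w : A -> A -> K).
Hypothesis Hquad : is_quadratic_LD succ prec w.

Local Notation circ := (circ succ prec).
Local Notation odot := (odot succ prec).
Local Notation star := (star succ prec).

Lemma succ_bilinear : bilinear_for *:%R *:%R succ.
Proof. by case: Hquad => [[/bilinear_op_for]]. Qed.
HB.instance Definition _ := bilinear_isBilinear.Build K A A A *:%R *:%R succ succ_bilinear.

Lemma prec_bilinear : bilinear_for *:%R *:%R prec.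
Proof. by case: Hquad => [[_ [/bilinear_op_for]]]. Qed.
HB.instance Definition _ := bilinear_isBilinear.Build K A A A *:%R *:%R prec prec_bilinear.

Lemma form_bilinear : bilinear_for *%R *%R w.
Proof. by case: Hquad => [_ [/bilinear_form_for]]. Qed.
HB.instance Definition _ := bilinear_isBilinear.Build K A A K *%R *%R w form_bilinear.

Lemma circ_bilinear : bilinear_for *:%R *:%R circ.
Proof. by split=> u a x y; rewrite /Defs.circ ?linearPl ?linearPr addrACA -scalerDr. Qed.
HB.instance Definition _ := bilinear_isBilinear.Build K A A A *:%R *:%R circ circ_bilinear.

Lemma odot_bilinear : bilinear_for *:%R *:%R odot.
Proof. by split=> u a x y; rewrite /Defs.odot ?linearPl ?linearPr addrACA -scalerDr. Qed.
HB.instance Definition _ := bilinear_isBilinear.Build K A A A *:%R *:%R odot odot_bilinear.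

Lemma star_bilinear : bilinear_for *:%R *:%R star.
Proof. by split=> u a x y; rewrite /Defs.star ?linearPl ?linearPr addrACA -scalerDr. Qed.
HB.instance Definition _ := bilinear_isBilinear.Build K A A A *:%R *:%R star star_bilinear.

Lemma form_sym x y : w x y = w y x.
Proof. by case: Hquad => _ [_ [->]]. Qed.

Lemma form_nondeg x : (forall y, w x y = 0) -> x = 0.
Proof. by case: Hquad => _ [_ [_ [/(_ x)]]]. Qed.

Lemma form_precl x y z : w (prec x y) z = w x (star y z).
Proof. by case: Hquad => _ [_ [_ [_ [->]]]]. Qed.

Lemma form_succl x y z : w (succ x y) z = - w y (circ x z).
Proof. by case: Hquad => _ [_ [_ [_ [_ ->]]]]. Qed.

Lemma form_inj u v : (forall z, w z u = w z v) -> u = v.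
Proof. by move=> uv; apply/subr0_eq/form_nondeg => z; rewrite form_sym linearBr /= uv subrr. Qed.

Lemma form_odotr x y z : w x (odot y z) = w (circ x y) z.
Proof.
rewrite /Defs.odot linearDr /= ![w x _]form_sym form_succl form_precl /Defs.star.
by rewrite [w z (circ y x + _)]linearDr /= addKr form_sym.
Qed.

Lemma Pmap_linear s : linear (Pmap w s).
Proof.
move=> a x y; rewrite /Pmap /Tr scaler_sumr -big_split; apply: eq_bigr => u _ /=.
by rewrite linearPl scalerDl scalerA.
Qed.
HB.instance Definition _ s := GRing.isLinear.Build K A A *:%R (Pmap w s) (Pmap_linear s).

Lemma PmapD s : {morph Pmap w s : u v / u + v}. Proof. exact: raddfD. Qed.
Lemma PmapN s : {morph Pmap w s : u / - u}. Proof. exact: raddfN. Qed.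
Lemma PmapZ s a : {morph Pmap w s : u / a *: u}. Proof. exact: linearZ. Qed.

(* [star] and [circ] are unfolded first: the linearity lemmas would otherwise match
   [circ a b] as a sum only sometimes, leaving [ring] with inconsistent atoms. *)
Ltac expand := rewrite /= /Defs.star /Defs.circ;
  repeat progress rewrite /= ?linearDl ?linearDr ?linearNl ?linearNr ?PmapD ?PmapN.

Lemma Pmap_adjoint s x z : w (Pmap w s x) z = w x (Pmap w (tau s) z).
Proof.
rewrite /Pmap /Tr /tau big_map linear_sumlz linear_sumr; apply: eq_bigr => u _ /=.
by rewrite linearZl linearZr /= mulrC [w u.2 _]form_sym.
Qed.

Lemma Pmap_tadd s t x : Pmap w (tadd s t) x = Pmap w s x + Pmap w t x.
Proof. by rewrite /Pmap /Tr big_cat. Qed.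

Lemma Pmap_teq2 s t : teq2 s t -> Pmap w s =1 Pmap w t.
Proof.
move=> st x; apply: form_inj => z; rewrite /Pmap /Tr !linear_sumr /=.
under eq_bigr do rewrite linearZr.
under [RHS]eq_bigr do rewrite linearZr.
exact: contraction_teq2 st.
Qed.

Lemma Pmap_circl s y : teq2 (tapp2 (odot y) id s) (tapp2 id (fun x => circ x y) s) ->
  forall x, Pmap w s (circ x y) = circ (Pmap w s x) y.
Proof.
move=> inv x; have := Pmap_teq2 inv x; rewrite /Pmap /Tr /tapp2 !big_map linear_sumlz /=.
under eq_bigr do rewrite form_odotr.
by under [RHS]eq_bigr do rewrite -linearZl.
Qed.

Lemma Pmap_precl s y : teq2 (tapp2 (star y) id s) (tapp2 id (fun x => prec x y) s) ->
  forall x, Pmap w s (prec x y) = prec (Pmap w s x) y.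
Proof.
move=> inv x; have := Pmap_teq2 inv x; rewrite /Pmap /Tr /tapp2 !big_map linear_sumlz /=.
under eq_bigr do rewrite -form_precl.
by under [RHS]eq_bigr do rewrite -linearZl.
Qed.

Variable r : seq (A * A).

Local Notation P := (Pmap w r).
Local Notation Q := (Pmap w (tau r)).
Local Notation T := (Pmap w (tadd r (tau r))).

Definition succ_defect x y :=
  succ (P x) (P y) - P (succ (P x) y + succ x (P y) - succ x (T y)).
Definition prec_defect x y :=
  prec (P x) (P y) - P (prec (P x) y + prec x (P y) - prec x (T y)).
Definition circ_defect x z := circ (P x) (P z) - P (circ x (P z)) + P (circ (Q x) z).

Lemma circ_defect_bilinear : bilinear_for *:%R *:%R circ_defect.
Proof.
split=> u a x y; apply: form_inj => v; rewrite /circ_defect; expand;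
  by repeat progress rewrite /= ?PmapZ ?linearZl ?linearZr; expand; ring.
Qed.
HB.instance Definition _ :=
  bilinear_isBilinear.Build K A A A *:%R *:%R circ_defect circ_defect_bilinear.

(* The pairing of S(r) with ω♯x ⊗ ω♯y ⊗ ω♯z. *)
Definition Sform x y z := \sum_(i <- r) \sum_(j <- r)
  (w x i.1 * w y j.1 * w z (circ j.2 i.2) - w x i.1 * w y (odot i.2 j.1) * w z j.2
   - w x (succ i.1 j.1) * w y i.2 * w z j.2).

Lemma form_Pmap_op (m : {bilinear A -> A -> A}) s t x y z :
  w z (m (Pmap w s x) (Pmap w t y)) =
  \sum_(i <- s) \sum_(j <- t) w x i.1 * w y j.1 * w z (m i.2 j.2).
Proof.
rewrite /Pmap /Tr linear_sumlz linear_sumr; apply: eq_bigr => i _ /=.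
rewrite linearZl /= linearZr /= !linear_sumr mulr_sumr; apply: eq_bigr => j _ /=.
by rewrite !linearZr /= mulrA.
Qed.

Lemma SformE x y z : Sform x y z = w z (circ_defect y x).
Proof.
have -> : Sform x y z =
    w z (circ (P y) (P x)) - w y (odot (P x) (Q z)) - w x (succ (Q y) (Q z)).
  have -> : w z (circ (P y) (P x)) =
      \sum_(i <- r) \sum_(j <- r) w x i.1 * w y j.1 * w z (circ j.2 i.2).
    rewrite (form_Pmap_op circ) exchange_big; apply: eq_bigr => i _.
    by apply: eq_bigr => j _; rewrite [w y _ * _]mulrC.
  rewrite (form_Pmap_op odot) (form_Pmap_op succ) /tau !big_map -!sumrB /Sform.
  by apply: eq_bigr => i _; rewrite !big_map -!sumrB; apply: eq_bigr => j _ /=; ring.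
rewrite form_odotr -Pmap_adjoint [w x _]form_sym form_succl [w (Q z) _]Pmap_adjoint tauK.
by rewrite [w (P _) z]form_sym /circ_defect !linearDr linearNr opprK.
Qed.

Lemma S_zero_circ_defect : S_zero succ prec r <-> forall x z, circ_defect x z = 0.
Proof.
have [f fE] := dual_basis form_nondeg.
have coordE p q t : Scoord succ prec r p q t = circ_defect (f q) (f p) 0 t.
  transitivity (Sform (f p) (f q) (f t)); last by rewrite SformE fE.
  rewrite /Sform /Scoord.
  by apply: eq_bigr => i _; apply: eq_bigr => j _; rewrite !fE.
split=> [S0 x z | cd0 p q t]; last by rewrite coordE cd0 mxE.
rewrite [x](dual_basis_expand form_nondeg fE) [z](dual_basis_expand form_nondeg fE).
rewrite linear_sumlz big1 // => p _; rewrite linearZl linear_sumr /= big1 ?scaler0 // => q _.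
rewrite linearZr /=.
have -> : circ_defect (f p) (f q) = 0 by apply/rowP => t; rewrite -coordE S0 mxE.
by rewrite scaler0.
Qed.

Hypothesis Hinv : LD_invariant succ prec (tadd r (tau r)).

Lemma T_split x : T x = P x + Q x.
Proof. exact: Pmap_tadd. Qed.

Lemma Pmap_tau_T x : Pmap w (tau (tadd r (tau r))) x = T x.
Proof. by rewrite /tadd {1}/tau map_cat -!/(tau _) tauK !Pmap_tadd addrC. Qed.

Lemma T_adjoint x z : w (T x) z = w x (T z).
Proof. by rewrite Pmap_adjoint Pmap_tau_T. Qed.

Lemma T_circl x y : T (circ x y) = circ (T x) y.
Proof. exact: Pmap_circl (Hinv y).1 x. Qed.

Lemma T_precl x y : T (prec x y) = prec (T x) y.
Proof. by rewrite -!Pmap_tau_T; exact: Pmap_precl (Hinv y).2 x. Qed.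

Lemma T_starr x y : T (star x y) = star x (T y).
Proof.
apply: form_inj => z.
by rewrite -[RHS]form_precl -[RHS]T_adjoint T_precl [RHS]form_precl [RHS]T_adjoint.
Qed.

Lemma T_circ_balanced x y : circ x (T y) = circ (T x) y.
Proof.
by have := T_starr x y; rewrite /Defs.star linearD /= !T_circl => /addIr.
Qed.

Lemma T_circr x y : T (circ x y) = circ x (T y).
Proof. by rewrite T_circl T_circ_balanced. Qed.

Lemma T_starl x y : T (star x y) = star (T x) y.
Proof. by rewrite /Defs.star linearD /= T_circl T_circr. Qed.

Lemma T_star_balanced x y : star x (T y) = star (T x) y.
Proof. by rewrite -T_starr T_starl. Qed.

Lemma Q_T_sub x : Q x = T x - P x.
Proof. by rewrite T_split addrAC subrr add0r. Qed.

Lemma succ_defect_pairing x y z : w (succ_defect x y) z = - w y (circ_defect x z).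
Proof.
have -> : circ_defect x z = Q (circ (P x) z) - circ (P x) (Q z) + P (circ x (Q z)).
  rewrite [Q (circ _ _)]Q_T_sub T_circr [in P (circ x (Q z))]Q_T_sub.
  rewrite [circ x (T z - P z)]linearBr /= [circ x (T z)]T_circ_balanced.
  by apply: form_inj => v; rewrite /circ_defect !T_split; expand; ring.
rewrite /succ_defect T_split; expand.
by rewrite ?(form_succl, Pmap_adjoint, tauK); expand; ring.
Qed.

Lemma prec_defect_pairing x y z :
  w (prec_defect x y) z = w x (circ_defect y z + circ_defect z y).
Proof.
have -> : circ_defect y z + circ_defect z y =
    Q (star (P y) z) - Q (star y (Q z)) + star (Q y) (Q z).
  transitivity (star (P y) (P z) + P (star (Q y) z) - P (star y (P z))).
    apply/esym/subr0_eq; transitivity (P (circ z (T y) - circ (T z) y)).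
      by apply: form_inj => v; rewrite /circ_defect !T_split; expand; ring.
    by rewrite T_circ_balanced subrr linear0.
  rewrite [Q (star (P y) z)]Q_T_sub [Q (star y (Q z))]Q_T_sub T_starr T_starl.
  rewrite [in P (star y (Q z))]Q_T_sub [star y (T z - P z)]linearBr /=.
  rewrite [star y (T z)]T_star_balanced.
  by apply: form_inj => v; rewrite !T_split; expand; ring.
rewrite /prec_defect T_split; expand.
by rewrite ?(form_precl, Pmap_adjoint, tauK); expand; ring.
Qed.

Lemma succ_defect_eq0 x :
  (forall y, succ_defect x y = 0) <-> (forall z, circ_defect x z = 0).
Proof.
split=> sd0 z; apply: form_nondeg => y.
  by rewrite form_sym -[LHS]opprK -succ_defect_pairing sd0 linear0l oppr0.
by rewrite succ_defect_pairing sd0 linear0r oppr0.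
Qed.

Lemma prec_defect_eq0 :
  (forall x z, circ_defect x z = 0) -> forall x y, prec_defect x y = 0.
Proof.
by move=> cd0 x y; apply: form_nondeg => z; rewrite prec_defect_pairing !cd0 addr0 linear0r.
Qed.
End LeibnizDendriform.

Theorem mainTheorem16 (K : fieldType) (n : nat)
  (succ prec : 'rV[K]_n -> 'rV[K]_n -> 'rV[K]_n)
  (omega : 'rV[K]_n -> 'rV[K]_n -> K)
  (r : seq ('rV[K]_n * 'rV[K]_n)) :
  is_quadratic_LD succ prec omega ->
  LD_invariant succ prec (tadd r (tau r)) ->
  let P := Pmap omega r in
  S_zero succ prec r <->
  ((forall x y, succ (P x) (P y) =
       P (succ (P x) y + succ x (P y) - succ x (Tr (tadd r (tau r)) (omega y)))) /\
   (forall x y, prec (P x) (P y) =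
       P (prec (P x) y + prec x (P y) - prec x (Tr (tadd r (tau r)) (omega y))))).
Proof.
move=> Hquad Hinv P; rewrite /P (S_zero_circ_defect Hquad).
split=> [cd0 | [succ_id _] x].
  split=> x y; apply/subr0_eq.
    exact: (succ_defect_eq0 Hquad Hinv x).2 (cd0 x) y.
  exact (prec_defect_eq0 Hquad Hinv cd0 x y).
by apply/(succ_defect_eq0 Hquad Hinv x) => y; rewrite /succ_defect succ_id subrr.
Qed.
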